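(* Let $R$ be a Bézout domain of finite Krull dimension. Then $R$ is radically finite if and only if $R$ is a principal ideal domain.
   Context: All rings are commutative with identity. An ideal $I$ of $R$ is called radically perfect if $\mathrm{ht}(I)=\inf\{n \mid \sqrt{I}=\sqrt{(\theta_1,\dots,\theta_n)} \text{ for some } \theta_1,\dots,\theta_n\in R\}$, and moreover, if $\mathrm{ht}(I)=0$, then $\sqrt{I}=\sqrt{(\theta)}$ for some zero divisor $\theta$ of $R$. A ring $R$ is called radically finite if every prime ideal $P$ of $R$ is radically perfect and, in addition, the set of ideals of $R$ that are generated by $\mathrm{ht}(P)$ elements and have radical $P$ has a maximal member $A$ such that there are only finitely many ideals in any chain of ideals between $A$ and $P$. *)

From mathcomp Require Import all_boot all_algebra.
Set Implicit Arguments. Unset Strict Implicit. Unset Printing Implicit Defensive.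
Import GRing.Theory.
Local Open Scope ring_scope.

Section IdealTheory.
Variable R : comNzRingType.

Definition subsetI (I J : R -> Prop) : Prop := forall x, I x -> J x.
Definition sameI (I J : R -> Prop) : Prop := forall x, I x <-> J x.

Definition is_ideal (I : R -> Prop) : Prop :=
  [/\ I 0, (forall x y, I x -> I y -> I (x + y)) & (forall a x, I x -> I (a * x))].

Definition is_prime (P : R -> Prop) : Prop :=
  [/\ is_ideal P, ~ P 1 & (forall a b, P (a * b) -> P a \/ P b)].

Definition gen (n : nat) (theta : 'I_n -> R) (x : R) : Prop :=
  exists c : 'I_n -> R, x = \sum_(i < n) c i * theta i.

Definition gen1 (d : R) (x : R) : Prop := exists c : R, x = c * d.

Definition rad (I : R -> Prop) (x : R) : Prop := exists k : nat, I (x ^+ k).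

Definition zero_divisor (t : R) : Prop := exists y : R, y != 0 /\ t * y = 0.

Definition prime_chain_below (P : R -> Prop) (n : nat) : Prop :=
  exists Q : nat -> (R -> Prop),
    [/\ (forall i, (i <= n)%N -> is_prime (Q i)),
        (forall i, (i < n)%N -> subsetI (Q i) (Q i.+1) /\
                                exists x, Q i.+1 x /\ ~ Q i x)
      & sameI (Q n) P].

(* ht(P) = h for a prime P, heights valued in nat extended by None = infinity *)
Definition prime_height (P : R -> Prop) (h : option nat) : Prop :=
  match h with
  | Some n => prime_chain_below P n /\ (forall m, prime_chain_below P m -> (m <= n)%N)
  | None => forall n, prime_chain_below P n
  end.

Definition rad_gen_inf (I : R -> Prop) (h : option nat) : Prop :=
  match h with
  | Some n => (exists theta : 'I_n -> R, sameI (rad I) (rad (gen theta))) /\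
              (forall m (theta : 'I_m -> R), (m < n)%N -> ~ sameI (rad I) (rad (gen theta)))
  | None => forall m (theta : 'I_m -> R), ~ sameI (rad I) (rad (gen theta))
  end.

(* radically perfect (stated for prime ideals, the only case used) *)
Definition radically_perfect (P : R -> Prop) : Prop :=
  (exists h, prime_height P h /\ rad_gen_inf P h) /\
  (prime_height P (Some 0%N) ->
     exists t, zero_divisor t /\ sameI (rad P) (rad (gen1 t))).

Definition gen_rad_set (P : R -> Prop) (n : nat) (A : R -> Prop) : Prop :=
  exists theta : 'I_n -> R, sameI A (gen theta) /\ sameI (rad A) P.

Definition finite_chains_between (A P : R -> Prop) : Prop :=
  forall C : (R -> Prop) -> Prop,
    (forall J, C J -> is_ideal J /\ subsetI A J /\ subsetI J P) ->
    (forall J K, C J -> C K -> subsetI J K \/ subsetI K J) ->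
    exists (N : nat) (f : nat -> (R -> Prop)),
      forall J, C J -> exists2 i, (i < N)%N & sameI J (f i).

Definition radically_finite : Prop :=
  forall P : R -> Prop, is_prime P ->
    radically_perfect P /\
    exists n, prime_height P (Some n) /\
      exists A, [/\ gen_rad_set P n A,
                    (forall B, gen_rad_set P n B -> subsetI A B -> subsetI B A)
                  & finite_chains_between A P].

Definition finite_krull_dim : Prop :=
  exists d : nat, forall P n, is_prime P -> prime_chain_below P n -> (n <= d)%N.

Definition bezout : Prop :=
  forall n (theta : 'I_n -> R), exists d : R, sameI (gen theta) (gen1 d).

Definition pid : Prop :=
  forall I : R -> Prop, is_ideal I -> exists d : R, sameI I (gen1 d).

End IdealTheory.

From mathcomp Require Import all_boot all_algebra.
From mathcomp Require Import boolp classical_sets.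
Set Implicit Arguments. Unset Strict Implicit. Unset Printing Implicit Defensive.
Import GRing.Theory.
Local Open Scope ring_scope.

(* In a PID every nonzero prime (d) has height one and needs one generator up to
   radical, so P itself is the required maximal ideal A and the chains between A
   and P are trivial.  Conversely, let A = (theta_1, ..., theta_n) be the maximal
   ideal with radical P given by radical finiteness.  In a Bezout domain A = (d);
   for x in P write (d, x) = (e): the ideal (e, ..., e) with n generators still
   has radical P and contains A, so by maximality x lies in A.  Thus P = (d), and
   by Cohen's theorem a ring whose primes are principal is a PID. *)

Section ZornNonempty.
Local Open Scope classical_set_scope.

Lemma Zorn_bigcup_nonempty (T : Type) (Q : set (set T)) :
  Q !=set0 ->
  (forall F : set (set T), F `<=` Q -> total_on F subset -> F !=set0 ->
     Q (\bigcup_(X in F) X)) ->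
  exists A, Q A /\ forall B, A `<` B -> ~ Q B.
Proof.
move=> [X0 QX0] Qchain.
(* Zorn_bigcup also demands an upper bound for the empty chain, so add set0. *)
pose P X := X = set0 \/ Q X.
have [A [PA Amax]] : exists A, P A /\ forall B, A `<` B -> ~ P B.
  apply: Zorn_bigcup => F FP Ftot.
  have [[X [FX QX]]|noQ] := pselect (exists X, F X /\ Q X); last first.
    left; apply/seteqP; split=> // x [X FX Xx].
    have [X_0|QX] := FP X FX; first by rewrite X_0 in Xx.
    by exfalso; apply: noQ; exists X.
  have -> : \bigcup_(X in F) X = \bigcup_(X in F `&` Q) X.
    apply/seteqP; split=> x [Y FY Yx]; last by exists Y => //; case: FY.
    have [Y_0|QY] := FP Y FY; first by rewrite Y_0 in Yx.
    by exists Y.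
  right; apply: Qchain; [by move=> Y [] | | by exists X].
  by move=> Y Z [FY _] [FZ _]; exact: Ftot.
exists A; split; last by move=> B AB QB; apply: (Amax B AB); right.
have [A0|//] := PA; rewrite A0 in Amax *.
have [X0_0|X0n0] := pselect (X0 = set0); first by rewrite -X0_0.
exfalso; apply: (Amax X0); last by right.
by split; [exact: sub0set | rewrite subset0].
Qed.

End ZornNonempty.

Section IdealBasics.
Variable R : comNzRingType.
Implicit Types (P I J : R -> Prop) (d e : R).

Lemma gen_ideal n (theta : 'I_n -> R) : is_ideal (gen theta).
Proof.
split.
- by exists (fun _ => 0); rewrite big1 // => i _; rewrite mul0r.
- move=> x y [c ->] [c' ->]; exists (fun i => c i + c' i).
  by rewrite -big_split /=; apply: eq_bigr => i _; rewrite mulrDl.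
- move=> a x [c ->]; exists (fun i => a * c i).
  by rewrite mulr_sumr; apply: eq_bigr => i _; rewrite mulrA.
Qed.

Lemma gen_mem n (theta : 'I_n -> R) i : gen theta (theta i).
Proof.
exists (fun j => (j == i)%:R).
by rewrite (bigD1 i) //= eqxx mul1r big1 ?addr0 // => j /negPf ->; rewrite mul0r.
Qed.

Lemma gen_min n (theta : 'I_n -> R) J :
  is_ideal J -> (forall i, J (theta i)) -> subsetI (gen theta) J.
Proof. by case=> J0 JD JM Jtheta x [c ->]; apply: big_ind => // i _; apply: JM. Qed.

Lemma gen_empty (theta : 'I_0 -> R) x : gen theta x <-> x = 0.
Proof.
split; first by case=> c ->; rewrite big_ord0.
by move=> ->; exists (fun _ => 0); rewrite big_ord0.
Qed.

Lemma gen1_ideal d : is_ideal (gen1 d).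
Proof.
split.
- by exists 0; rewrite mul0r.
- by move=> x y [c ->] [c' ->]; exists (c + c'); rewrite mulrDl.
- by move=> a x [c ->]; exists (a * c); rewrite mulrA.
Qed.

Lemma gen1_mem d : gen1 d d. Proof. by exists 1; rewrite mul1r. Qed.

Lemma gen1_min d J : is_ideal J -> J d -> subsetI (gen1 d) J.
Proof. by case=> _ _ JM Jd x [c ->]; apply: JM. Qed.

Lemma gen_cst n e : sameI (gen (fun _ : 'I_n.+1 => e)) (gen1 e).
Proof.
move=> x; split.
- by apply: gen_min => [|_]; [exact: gen1_ideal | exact: gen1_mem].
- by apply: gen1_min; [exact: gen_ideal | exact: (gen_mem _ ord0)].
Qed.

Lemma radS I J : subsetI I J -> subsetI (rad I) (rad J).
Proof. by move=> IJ x [k Ixk]; exists k; apply: IJ. Qed.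

Lemma rad_sameI I J : sameI I J -> sameI (rad I) (rad J).
Proof. by move=> IJ x; split; apply: radS => y /IJ. Qed.

Lemma sub_rad I : subsetI I (rad I).
Proof. by move=> x Ix; exists 1%N; rewrite expr1. Qed.

Lemma rad_prime P : is_prime P -> sameI (rad P) P.
Proof.
case=> _ P1 Pprime x; split; last exact: sub_rad.
case=> k; elim: k => [|k IHk]; first by rewrite expr0 => /P1.
by rewrite exprS => /Pprime [|/IHk].
Qed.

End IdealBasics.

Section Cohen.
Variable R : comNzRingType.
Implicit Types (I M B : R -> Prop) (a c : R).
Local Open Scope classical_set_scope.

Definition principal I : Prop := exists d, sameI I (gen1 d).

Definition adjoin I a (x : R) : Prop := exists i c, I i /\ x = i + c * a.

Definition colon I c (x : R) : Prop := I (x * c).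

Lemma adjoin_ideal I a : is_ideal I -> is_ideal (adjoin I a).
Proof.
case=> I0 ID IM; split.
- by exists 0, 0; rewrite mul0r addr0.
- move=> _ _ [i [c [Ii ->]]] [j [c' [Ij ->]]]; exists (i + j), (c + c').
  by split; [exact: ID | rewrite mulrDl addrACA].
- move=> r _ [i [c [Ii ->]]]; exists (r * i), (r * c).
  by split; [exact: IM | rewrite mulrDr mulrA].
Qed.

Lemma sub_adjoin I a : subsetI I (adjoin I a).
Proof. by move=> x Ix; exists x, 0; rewrite mul0r addr0. Qed.

Lemma adjoin_mem I a : is_ideal I -> adjoin I a a.
Proof. by case=> I0 _ _; exists 0, 1; rewrite add0r mul1r. Qed.

Lemma colon_ideal I c : is_ideal I -> is_ideal (colon I c).
Proof.
case=> I0 ID IM; split; rewrite /colon.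
- by rewrite mul0r.
- by move=> x y Ix Iy; rewrite mulrDl; exact: ID.
- by move=> r x Ix; rewrite -mulrA; exact: IM.
Qed.

Lemma sub_colon I c : is_ideal I -> subsetI I (colon I c).
Proof. by case=> _ _ IM x Ix; rewrite /colon mulrC; exact: IM. Qed.

Lemma bigcup_chain_ideal (F : set (set R)) :
  F !=set0 -> (forall X, F X -> is_ideal X) -> total_on F subset ->
  is_ideal (\bigcup_(X in F) X).
Proof.
move=> [X0 FX0] Fideal Ftot; split.
- by exists X0 => //; case: (Fideal X0 FX0).
- move=> x y [X FX Xx] [Y FY Yy].
  have [XY|YX] := Ftot X Y FX FY.
  + by exists Y => //; case: (Fideal Y FY) => _ YD _; apply: YD => //; exact: XY.
  + by exists X => //; case: (Fideal X FX) => _ XD _; apply: XD => //; exact: YX.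
- move=> a x [X FX Xx]; exists X => //.
  by case: (Fideal X FX) => _ _ XM; exact: XM.
Qed.

Lemma bigcup_nonprincipal (F : set (set R)) :
  (forall X, F X -> is_ideal X /\ ~ principal X) ->
  ~ principal (\bigcup_(X in F) X).
Proof.
move=> Fnp [d Ud].
have [X FX Xd] := (Ud d).2 (gen1_mem d).
have [XI Xnp] := Fnp X FX; apply: Xnp; exists d => x; split.
- by move=> Xx; apply/(Ud x).1; exists X.
- exact: gen1_min.
Qed.

Lemma exists_maximal_nonprincipal I :
  is_ideal I -> ~ principal I ->
  exists M, [/\ is_ideal M, ~ principal M &
    forall B, is_ideal B -> subsetI M B -> ~ subsetI B M -> principal B].
Proof.
move=> II Inp.
have [|M [[MI Mnp] Mmax]] := @Zorn_bigcup_nonempty R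
    (fun X => is_ideal X /\ ~ principal X) (ex_intro _ I (conj II Inp)).
  move=> F FQ Ftot Fn0; split; last exact: bigcup_nonprincipal.
  by apply: bigcup_chain_ideal => // X /FQ [].
exists M; split=> // B BI MB BM.
by have [//|Bnp] := pselect (principal B); case: (Mmax B).
Qed.

Lemma nonprincipal_maximal_prime M :
  is_ideal M -> ~ principal M ->
  (forall B, is_ideal B -> subsetI M B -> ~ subsetI B M -> principal B) ->
  is_prime M.
Proof.
move=> MI Mnp Mmax; have [M0 MD MM] := MI.
split=> // [M1|a b Mab].
  apply: Mnp; exists 1 => x; split=> [_|[c ->]]; last exact: MM.
  by exists x; rewrite mulr1.
have [Ma|Ma] := pselect (M a); first by left.
have [Mb|Mb] := pselect (M b); first by right.
exfalso.
(* M + (a) = (c) and (M : c) = (e) force M = (e c). *)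
have [c Hc] : principal (adjoin M a).
  apply: Mmax; [exact: adjoin_ideal | exact: sub_adjoin |].
  by move/(_ a (adjoin_mem a MI)).
have [e He] : principal (colon M c).
  apply: Mmax; [exact: colon_ideal | exact: sub_colon |].
  suff Mcb : colon M c b by move/(_ b Mcb).
  have [i [r [Mi ->]]] := (Hc c).2 (gen1_mem c).
  rewrite /colon mulrDr; apply: MD; first exact: MM.
  by rewrite mulrCA; apply: MM; rewrite mulrC.
apply: Mnp; exists (e * c) => x; split.
- move=> Mx; have [y xE] := (Hc x).1 (sub_adjoin a Mx).
  have [z yE] : gen1 e y by apply/(He y).1; rewrite /colon -xE.
  by exists z; rewrite xE yE mulrA.
- by apply: gen1_min => //; exact: (He e).2 (gen1_mem e).
Qed.

Lemma primes_principal_pid :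
  (forall P, is_prime P -> principal P) -> pid R.
Proof.
move=> Pprinc I II; have [//|Inp] := pselect (principal I).
have [M [MI Mnp Mmax]] := exists_maximal_nonprincipal II Inp.
by case: (Mnp (Pprinc M (nonprincipal_maximal_prime MI Mnp Mmax))).
Qed.

End Cohen.

Section PrimeChains.
Variable R : comNzRingType.
Implicit Types P : R -> Prop.

Lemma prime_chain_below_nonzero P m :
  prime_chain_below P m.+1 -> exists2 x, P x & x != 0.
Proof.
case=> Q [Qprime Qsub QP]; have [_ [x [Qx nQx]]] := Qsub m (ltnSn m).
exists x; first exact/(QP x).
apply/eqP => x0; apply: nQx; rewrite x0.
by case: (Qprime m (leqnSn m)) => [[]].
Qed.

Lemma prime_chain_below_pred P m :
  prime_chain_below P m.+1 ->
  exists Q, [/\ is_prime Q, prime_chain_below Q m, subsetI Q P & ~ subsetI P Q].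
Proof.
case=> Q [Qprime Qsub QP]; have [Qm_sub [y [Qy nQy]]] := Qsub m (ltnSn m).
exists (Q m); split.
- exact: Qprime (leqnSn m).
- exists Q; split=> [i /leqW|i /ltnW|x]; [exact: Qprime | exact: Qsub | exact: iff_refl].
- by move=> x /Qm_sub /(QP x).
- by move/(_ y ((QP y).1 Qy)).
Qed.

Lemma prime_height0 P :
  is_prime P -> (forall x, P x -> x = 0) -> prime_height P (Some 0%N).
Proof.
move=> HP P0; split.
  by exists (fun _ => P); split=> // x; exact: iff_refl.
by move=> [|m] // /prime_chain_below_nonzero [x /P0 ->]; rewrite eqxx.
Qed.

End PrimeChains.

Section RadicallyFiniteAt.
Variable R : comNzRingType.
Implicit Types P : R -> Prop.

Definition radically_finite_at P : Prop :=
  radically_perfect P /\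
  exists n, prime_height P (Some n) /\
    exists A, [/\ gen_rad_set P n A,
                  (forall B, gen_rad_set P n B -> subsetI A B -> subsetI B A)
                & finite_chains_between A P].

Lemma radically_finite_at_gen P n (theta : 'I_n -> R) :
  is_prime P -> sameI P (gen theta) -> prime_height P (Some n) ->
  (forall m (eta : 'I_m -> R), (m < n)%N -> ~ sameI (rad P) (rad (gen eta))) ->
  (prime_height P (Some 0%N) ->
     exists t, zero_divisor t /\ sameI (rad P) (rad (gen1 t))) ->
  radically_finite_at P.
Proof.
move=> HP Ptheta Ph Pmin Ph0; split.
  by split=> //; exists (Some n); split=> //; split=> //; exists theta; exact: rad_sameI.
exists n; split=> //; exists (gen theta); split.
- exists theta; split=> [x|x]; first exact: iff_refl.
  split=> [/(radS (fun y => (Ptheta y).2))/(rad_prime HP x) //|].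
  by move/(Ptheta x).1/sub_rad.
- by move=> B [eta [_ Beta]] _ x Bx; exact/(Ptheta x).1/(Beta x).1/sub_rad.
- move=> C HC _; exists 1%N, (fun _ => P) => J CJ; exists 0%N => // x.
  have [_ [thetaJ JP]] := HC J CJ; split; first exact: JP.
  by move/(Ptheta x).1; exact: thetaJ.
Qed.

End RadicallyFiniteAt.

Section PrincipalIdealDomain.
Variable R : idomainType.
Implicit Types (P Q : R -> Prop) (d : R).

Lemma rad_gen_empty (theta : 'I_0 -> R) x : rad (gen theta) x -> x = 0.
Proof. by case=> k /gen_empty /eqP; rewrite expf_eq0 => /andP [_ /eqP]. Qed.

Lemma zero_prime : is_prime (fun x : R => x = 0).
Proof.
split.
- split=> // [x y -> ->|a x ->]; [exact: addr0 | exact: mulr0].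
- by move/eqP; rewrite oner_eq0.
- by move=> a b /eqP; rewrite mulf_eq0 => /orP [/eqP|/eqP]; [left|right].
Qed.

Lemma pid_sub_nonzero_prime P Q :
  pid R -> is_prime P -> is_prime Q -> subsetI Q P -> (exists2 x, Q x & x != 0) ->
  subsetI P Q.
Proof.
move=> Rpid [PI P1 _] [QI _ Qprime] QP [x Qx x0].
have [p Pp] := Rpid P PI; have [q Qq] := Rpid Q QI.
have Qq_q : Q q := (Qq q).2 (gen1_mem q).
have q0 : q != 0.
  by apply: contraNneq x0 => q0; have [c ->] := (Qq x).1 Qx; rewrite q0 mulr0.
have [c qE] := (Pp q).1 (QP q Qq_q).
have /Qprime [Qc|Qp] : Q (c * p) by rewrite -qE.
- exfalso; have [c' cE] := (Qq c).1 Qc; apply: P1; apply/(Pp 1).2; exists c'.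
  by apply: (mulfI q0); rewrite mulr1 {1}qE cE mulrCA mulrA.
- by move=> y /(Pp y).1; apply: gen1_min.
Qed.

Lemma pid_prime_height1 P d :
  pid R -> is_prime P -> sameI P (gen1 d) -> d != 0 -> prime_height P (Some 1%N).
Proof.
move=> Rpid HP Pd d0; split.
  exists (fun i => if i == 0%N then (fun x : R => x = 0) else P); split=> //.
  - by case=> [|[|]] //= _; exact: zero_prime.
  - case=> // _; split; first by move=> x /= ->; case: HP => [[]].
    by exists d; split=> /=; [exact: (Pd d).2 (gen1_mem d) | exact/eqP].
move=> [|[|m]] // /prime_chain_below_pred [Q [HQ /prime_chain_below_nonzero Qn0 QP PQ]].
by case: (PQ (pid_sub_nonzero_prime Rpid HP HQ QP Qn0)).
Qed.

Lemma zero_prime_radically_finite_at P :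
  is_prime P -> (forall x, P x -> x = 0) -> radically_finite_at P.
Proof.
move=> HP P0; have P_0 : P 0 by case: HP => [[]].
have Pgen : sameI P (gen (fun _ : 'I_0 => 0 : R)).
  by move=> x; split=> [/P0 ->|/gen_empty ->] //; exact/gen_empty.
apply: (radically_finite_at_gen HP Pgen (prime_height0 HP P0)) => // _.
exists 0; split; first by exists 1; rewrite oner_eq0 mul0r.
apply: rad_sameI => x; split=> [/P0 ->|[c ->]]; last by rewrite mulr0.
by exists 0; rewrite mulr0.
Qed.

Lemma pid_nonzero_prime_radically_finite_at P d :
  pid R -> is_prime P -> sameI P (gen1 d) -> d != 0 -> radically_finite_at P.
Proof.
move=> Rpid HP Pd d0; have Ph := pid_prime_height1 Rpid HP Pd d0.
have Pgen : sameI P (gen (fun _ : 'I_1 => d)).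
  by move=> x; split=> [/(Pd x).1/(gen_cst 0 d x).2|/(gen_cst 0 d x).1/(Pd x).2].
apply: (radically_finite_at_gen HP Pgen Ph).
- move=> [|//] eta _ Peta.
  have : rad (gen eta) d by apply/(Peta d)/sub_rad/(Pd d).2/gen1_mem.
  by move/rad_gen_empty/eqP; rewrite (negbTE d0).
- by case=> _ /(_ 1%N Ph.1).
Qed.

Lemma pid_radically_finite : pid R -> radically_finite R.
Proof.
move=> Rpid P HP; have PI : is_ideal P by case: HP.
have [d Pd] := Rpid P PI.
have [d_0|d0] := eqVneq d 0; last exact: pid_nonzero_prime_radically_finite_at Pd d0.
by apply: zero_prime_radically_finite_at => // x /(Pd x).1 [c ->]; rewrite d_0 mulr0.
Qed.

End PrincipalIdealDomain.

Lemma bezout_radically_finite_prime_principal (R : idomainType) (P : R -> Prop) :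
  bezout R -> radically_finite R -> is_prime P -> principal P.
Proof.
move=> Rbezout Rrf HP; have PI : is_ideal P by case: HP.
have [_ [n [_ [A [[theta [Atheta Arad]] Amax _]]]]] := Rrf P HP.
have AP : subsetI A P by move=> y /sub_rad /(Arad y).
case: n theta Atheta Arad Amax => [|n] theta Atheta Arad Amax.
  exists 0 => x; split=> [|[c ->]]; last by rewrite mulr0; case: PI.
  move=> /(Arad x).2 /(radS (fun y => (Atheta y).1)) /rad_gen_empty ->.
  by exists 0; rewrite mulr0.
have [d Ad] := Rbezout _ theta.
suff PA : subsetI P A.
  by exists d => y; split=> [/PA/(Atheta y).1/(Ad y).1|/(Ad y).2/(Atheta y).2/AP].
move=> x Px; pose dx (i : 'I_2) := if i == ord0 then d else x.
have [e Ee] := Rbezout _ dx.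
have Pd : P d := AP _ ((Atheta d).2 ((Ad d).2 (gen1_mem d))).
have Pe : P e.
  by apply: (gen_min PI _ ((Ee e).2 (gen1_mem e))) => i; rewrite /dx; case: ifP.
pose B := gen (fun _ : 'I_n.+1 => e).
have BP : subsetI B P by move=> y /(gen_cst n e y).1; exact: gen1_min.
have AB : subsetI A B.
  move=> y /(Atheta y).1 /(Ad y).1; apply: gen1_min; first exact: gen_ideal.
  by apply/(gen_cst n e d).2/(Ee d).1; exact: (gen_mem dx ord0).
have Brad : gen_rad_set P n.+1 B.
  exists (fun _ => e); split=> [y|y]; first exact: iff_refl.
  by split=> [/(radS BP)/(rad_prime HP y)|/(Arad y).2/(radS AB)].
apply: (Amax B Brad AB); apply/(gen_cst n e x).2/(Ee x).1.
exact: (gen_mem dx ord_max).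
Qed.

Theorem corollary2p4 (R : idomainType) :
  bezout R -> finite_krull_dim R -> (radically_finite R <-> pid R).
Proof.
move=> Rbezout _; split; last exact: pid_radically_finite.
move=> Rrf; apply: primes_principal_pid => P HP.
exact: bezout_radically_finite_prime_principal.
Qed.
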